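(* Consider $n\ge 2$ agents in $\mathbb{R}^d$ ($d\ge 2$) with undirected graph $\mathcal{G}=(\mathcal{V},\mathcal{E})$, desired bearings $\{g_{ij}^*\}_{(i,j)\in\mathcal{E}}$, leaders $\mathcal{V}_\ell=\{1,\dots,n_\ell\}$ and followers $\mathcal{V}_f=\{n_\ell+1,\dots,n\}$ (with $n_f=n-n_\ell$), and suppose the standing assumption below holds. Let $\mathcal{L}_{ff}$ be the follower–follower block of the bearing Laplacian. Then for all $k_P>0$ and $k_I>0$ the matrix $$A=\begin{bmatrix}-k_P\mathcal{L}_{ff} & -k_I I_{dn_f}\\ \mathcal{L}_{ff} & 0\end{bmatrix}\in\mathbb{R}^{2dn_f\times 2dn_f}$$ is Hurwitz (all its eigenvalues have negative real part).
   Context: For nonzero $x\in\mathbb{R}^d$, $P_x=I_d-\frac{xx^T}{\|x\|^2}$. The bearing Laplacian $\mathcal{L}\in\mathbb{R}^{dn\times dn}$ has $(i,j)$-th $d\times d$ block $0$ if $i\ne j,(i,j)\notin\mathcal{E}$; $-P_{g_{ij}^*}$ if $i\ne j,(i,j)\in\mathcal{E}$; $\sum_{k\in\mathcal{N}_i}P_{g_{ik}^*}$ if $i=j$ (where $\mathcal{N}_i$ is the neighbor set of $i$). $\mathcal{L}_{ff}$ is its lower-right $dn_f\times dn_f$ block (rows and columns of followers). Infinitesimal bearing rigidity: for $p=[p_1^T,\dots,p_n^T]^T$ with no two $p_i$ coinciding, orient each edge of $\mathcal{G}$, let $g_k=(p_j-p_i)/\|p_j-p_i\|$ for the $k$-th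 oriented edge $(i,j)$, $F_B(p)=[g_1^T,\dots,g_m^T]^T$, and $R_B(p)=\partial F_B/\partial p\in\mathbb{R}^{dm\times dn}$; the formation $\mathcal{G}(p)$ is infinitesimally bearing rigid if $\mathrm{Null}(R_B(p))=\mathrm{span}\{\mathbf{1}_n\otimes I_d,\,p\}$ (i.e. all infinitesimal bearing motions are translations and scalings). Standing assumption: there is a configuration $p^*$ with $(p_j^*-p_i^* )/\|p_j^*-p_i^*\|=g_{ij}^*$ for all $(i,j)\in\mathcal{E}$ (the target formation, whose leader positions coincide with the actual leader positions), this formation $\mathcal{G}(p^* )$ is infinitesimally bearing rigid, and there are at least two leaders ($n_\ell\ge2$). Under this assumption $\mathcal{L}_{ff}$ is symmetric positive definite. *)

From HB Require Import structures.
From mathcomp Require Import all_boot all_order all_algebra.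
From mathcomp Require Import reals topology normedtype derive.
Import numFieldNormedType.Exports.
From mathcomp Require Import complex.
Set Implicit Arguments. Unset Strict Implicit. Unset Printing Implicit Defensive.
Import Order.TTheory GRing.Theory Num.Theory.
Local Open Scope ring_scope.

Section BearingDefs.
Variable R : realType.

Definition vnorm (d : nat) (x : 'cV[R]_d) : R := Num.sqrt ((x^T *m x) ord0 ord0).

Definition projP (d : nat) (x : 'cV[R]_d) : 'M[R]_d :=
  1%:M - (vnorm x ^+ 2)^-1 *: (x *m x^T).

Definition bearing (d : nat) (x y : 'cV[R]_d) : 'cV[R]_d :=
  (vnorm (y - x))^-1 *: (y - x).

Definition lap_block (n d : nat) (adj : rel 'I_n) (g : 'I_n -> 'I_n -> 'cV[R]_d)
  (i j : 'I_n) : 'M[R]_d :=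
  if i == j then \sum_(k < n | adj i k) projP (g i k)
  else if adj i j then - projP (g i j) else 0.

End BearingDefs.

Lemma blk_idx_lt (m d a : nat) : (a < m * d)%N -> (a %/ d < m)%N.
Proof.
case: d => [|d]; first by rewrite muln0.
by move=> h; rewrite ltn_divLR.
Qed.

(* index a = i*d + r of a stacked vector in R^{dm}: agent i, coordinate r *)
Definition blk_agent (m d : nat) (a : 'I_(m * d)) : 'I_m :=
  Ordinal (blk_idx_lt (ltn_ord a)).

Lemma blk_coord_lt (m d : nat) (a : 'I_(m * d)) : (a %% d < d)%N.
Proof.
case: d a => [|d] a; last by rewrite ltn_mod.
by have := ltn_ord a; rewrite [X in (_ < X)%N]muln0.
Qed.

Definition blk_coord (m d : nat) (a : 'I_(m * d)) : 'I_d :=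
  Ordinal (blk_coord_lt a).

Definition blockmx_of {R : Type} (m d : nat) (B : 'I_m -> 'I_m -> 'M[R]_d) :
  'M[R]_(m * d) :=
  \matrix_(a, b) B (blk_agent a) (blk_agent b) (blk_coord a) (blk_coord b).

Section Laplacian.
Variable R : realType.

Definition bearing_laplacian (n d : nat) (adj : rel 'I_n)
  (g : 'I_n -> 'I_n -> 'cV[R]_d) : 'M[R]_(n * d) :=
  blockmx_of (lap_block adj g).

Definition L_ff (nl nf d : nat) (adj : rel 'I_(nl + nf))
  (g : 'I_(nl + nf) -> 'I_(nl + nf) -> 'cV[R]_d) : 'M[R]_(nf * d) :=
  drsubmx (castmx (mulnDl nl nf d, mulnDl nl nf d) (bearing_laplacian adj g)).

(* Edges are oriented as (i,j) with i < j.  R_B(p) dp is the directional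
   derivative of F_B at p along dp, whose block for the oriented edge (i,j)
   is d/dt g_ij(p + t dp) at t = 0.  Null(R_B(p)) = span{1_n (x) I_d, p}. *)
Definition inf_bearing_rigid (n d : nat) (adj : rel 'I_n) (p : 'I_n -> 'cV[R]_d) :
  Prop :=
  (forall i j : 'I_n, i != j -> p i != p j) /\
  (forall dp : 'I_n -> 'cV[R]_d,
     (forall (i j : 'I_n) (r : 'I_d), adj i j -> (i < j)%N ->
        derive1 (fun t : R => bearing (p i + t *: dp i) (p j + t *: dp j) r ord0) 0
        = 0)
     <->
     (exists (w : 'cV[R]_d) (c : R), forall i, dp i = w + c *: p i)).

Definition hurwitz (N : nat) (A : 'M[R]_N) : Prop :=
  forall lam : R[i], eigenvalue (map_mx (fun x : R => (x%:C)%C) A) lam ->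
    complex.Re lam < 0.

End Laplacian.

From HB Require Import structures.
From mathcomp Require Import all_boot all_order all_algebra.
From mathcomp Require Import reals topology normedtype derive.
Import numFieldNormedType.Exports.
From mathcomp Require Import complex.
Import Order.TTheory GRing.Theory Num.Theory.
Local Open Scope ring_scope.
From mathcomp Require Import ring lra.

Set Implicit Arguments.
Unset Strict Implicit.
Unset Printing Implicit Defensive.

(* Along a left eigenvector [x, y] of the PI matrix with eigenvalue lam, pair
   the first block row with [conj x] and the second one, [-kI x = lam y], with
   [L_ff conj x]: eliminating [y] gives [-kP lam q - kI q = lam^2 m] with
   [q = x L_ff x^* > 0] and [m = x x^* > 0], and such a root has negative real
   part.
   [L_ff] is positive definite because its quadratic form at a follower
   vector is half the sum over edges of [|P_g (x_i - x_j)|^2], the leaders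
   being held at zero: a null vector is an infinitesimal bearing motion, hence
   a translation plus scaling by rigidity, and it vanishes at two distinct
   leaders, so it is zero. *)

Section Projection.
Variables (R : realType) (d : nat).
Implicit Types (x y v : 'cV[R]_d) (c : R).

Lemma vnorm_sqr x : vnorm x ^+ 2 = (x^T *m x) 0 0.
Proof.
rewrite /vnorm sqr_sqrtr // mxE; apply: sumr_ge0 => i _.
by rewrite mxE -expr2 sqr_ge0.
Qed.

Lemma vnormZ c x : vnorm (c *: x) = `|c| * vnorm x.
Proof.
rewrite /vnorm !linearZ /= -scalemxAl !mxE mulrA -expr2.
by rewrite sqrtrM ?sqr_ge0 // sqrtr_sqr.
Qed.

Lemma vnorm_eq0 x : (vnorm x == 0) = (x == 0).
Proof.
apply/idP/eqP => [|->]; last by rewrite /vnorm mulmx0 mxE sqrtr0.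
rewrite -sqrf_eq0 vnorm_sqr mxE => /eqP.
have sq_ge0 i : true -> 0 <= x^T 0 i * x i 0 by rewrite mxE -expr2 sqr_ge0.
move=> /(psumr_eq0P sq_ge0) x0; apply/matrixP => r j; rewrite ord1 mxE.
by have /eqP := x0 r isT; rewrite mxE -expr2 sqrf_eq0 => /eqP.
Qed.

Lemma trmx_projP x : (projP x)^T = projP x.
Proof. by rewrite /projP linearB /= trmx1 linearZ /= trmx_mul trmxK. Qed.

Lemma projP_idem x : projP x *m projP x = projP x.
Proof.
have xxT2 : x *m x^T *m (x *m x^T) = vnorm x ^+ 2 *: (x *m x^T).
  rewrite mulmxA -[x *m x^T *m x]mulmxA [x^T *m x]mx11_scalar mul_mx_scalar.
  by rewrite -scalemxAl vnorm_sqr.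
rewrite /projP mulmxBl mulmxBr !mul1mx mulmxBr mulmx1 -scalemxAl -scalemxAr.
rewrite xxT2 !scalerA.
have [->|n0] := eqVneq (vnorm x ^+ 2) 0; first by rewrite invr0 !mul0r !scale0r !subr0.
by rewrite -mulrA mulVf // mulr1 subrr subr0.
Qed.

Lemma projPZ c x : c != 0 -> projP (c *: x) = projP x.
Proof.
move=> c0; rewrite /projP vnormZ exprMn real_normK ?num_real //.
rewrite [(c *: x)^T]linearZ /= -scalemxAl -scalemxAr !scalerA.
have [->|x0] := eqVneq (vnorm x ^+ 2) 0; first by rewrite mulr0 !invr0 !mul0r.
by rewrite invfM -!mulrA mulrCA -expr2 mulVf ?mulr1 // sqrf_eq0.
Qed.

Lemma projPN x : projP (- x) = projP x.
Proof. by rewrite -scaleN1r projPZ // oppr_eq0 oner_eq0. Qed.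

Lemma projP_bearing x y : x != y -> projP (bearing x y) = projP (y - x).
Proof. by move=> xy; rewrite /bearing projPZ // invr_eq0 vnorm_eq0 subr_eq0 eq_sym. Qed.

Lemma projP_mul_eq0 x v : projP x *m v = 0 ->
  v = ((vnorm x ^+ 2)^-1 * (x^T *m v) 0 0) *: x.
Proof.
rewrite /projP mulmxBl mul1mx => /eqP; rewrite subr_eq0 => /eqP {1}->.
rewrite -scalemxAl -mulmxA -scalerA; congr (_ *: _).
by apply/matrixP => i j; rewrite !mxE big_ord1 !ord1 mulrC mxE.
Qed.

(* A relative motion [db - da] in the kernel of [projP (b - a)] is parallel to
   [b - a], so it only rescales [b - a] and leaves the bearing constant. *)
Lemma derive1_bearing_eq0 (a b da db : 'cV[R]_d) (r : 'I_d) :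
  projP (b - a) *m (db - da) = 0 ->
  derive1 (fun t : R => bearing (a + t *: da) (b + t *: db) r 0) 0 = 0.
Proof.
move=> /projP_mul_eq0; set s := (_ * _) => dab.
have rel t : (b + t *: db) - (a + t *: da) = (1 + t * s) *: (b - a).
  by rewrite scalerDl scale1r -scalerA -dab scalerBr opprD addrACA addrC.
rewrite derive1E (@near_eq_derive _ _ _ _ (fun=> (vnorm (b - a))^-1 * (b - a) r 0)).
  exact: derive_cst.
have s1_gt0 : 0 < (`|s| + 1)^-1 by rewrite invr_gt0 ltr_wpDl.
apply: filterS (nbhs0_lt s1_gt0) => t /= ts.
have ts_gt0 : 0 < 1 + t * s.
  have : `|t * s| < 1.
    rewrite normrM; apply: (@le_lt_trans _ _ (`|t| * (`|s| + 1))).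
      by rewrite ler_wpM2l // lerDl.
    by rewrite -ltr_pdivlMr ?mul1r // ltr_wpDl.
  by rewrite ltr_norml => /andP [+ _]; rewrite -ltrBlDl sub0r.
rewrite /bearing rel vnormZ !mxE (gtr0_norm ts_gt0) invfM.
by rewrite [_^-1 * _]mulrC -mulrA mulKf // gt_eqF.
Qed.

End Projection.

Section BilinearForm.
Variable R : realType.

Definition bform n (M : 'M[R]_n) (v w : 'cV[R]_n) : R := (v^T *m M *m w) 0 0.

Variable n : nat.
Implicit Types (M A : 'M[R]_n) (v w : 'cV[R]_n).

Lemma bformBl M v v' w : bform M (v - v') w = bform M v w - bform M v' w.
Proof. by rewrite /bform linearB /= !mulmxBl mxE [X in _ + X]mxE. Qed.

Lemma bformBr M v w w' : bform M v (w - w') = bform M v w - bform M v w'.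
Proof. by rewrite /bform mulmxBr mxE [X in _ + X]mxE. Qed.

Lemma bform0l M w : bform M 0 w = 0.
Proof. by rewrite /bform trmx0 !mul0mx mxE. Qed.

Lemma bform0r M v : bform M v 0 = 0.
Proof. by rewrite /bform mulmx0 mxE. Qed.

Lemma bform0M v w : bform 0 v w = 0.
Proof. by rewrite /bform mulmx0 mul0mx mxE. Qed.

Lemma bformNM M v w : bform (- M) v w = - bform M v w.
Proof. by rewrite /bform mulmxN mulNmx mxE. Qed.

Lemma bform_sumM I (r : seq I) (P : pred I) (F : I -> 'M[R]_n) v w :
  bform (\sum_(i <- r | P i) F i) v w = \sum_(i <- r | P i) bform (F i) v w.
Proof. by rewrite /bform mulmx_sumr mulmx_suml summxE. Qed.

Lemma bformE M v w : bform M v w = \sum_s \sum_r v r 0 * M r s * w s 0.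
Proof.
rewrite /bform mxE; apply: eq_bigr => s _; rewrite mxE big_distrl /=.
by apply: eq_bigr => r _; rewrite mxE.
Qed.

Lemma bform_gram A v : bform (A^T *m A) v v = vnorm (A *m v) ^+ 2.
Proof. by rewrite vnorm_sqr /bform trmx_mul !mulmxA. Qed.

Lemma bform_gram_ge0 A v : 0 <= bform (A^T *m A) v v.
Proof. by rewrite bform_gram sqr_ge0. Qed.

Lemma bform_gram_eq0 A v : bform (A^T *m A) v v = 0 -> A *m v = 0.
Proof. by rewrite bform_gram => /eqP; rewrite sqrf_eq0 vnorm_eq0 => /eqP. Qed.

Lemma bform1_gt0 v : v != 0 -> 0 < bform 1%:M v v.
Proof.
move=> v0; have := bform_gram 1%:M v; rewrite trmx1 mulmx1 mul1mx => ->.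
by rewrite exprn_gt0 // lt_def vnorm_eq0 v0 sqrtr_ge0.
Qed.

Lemma bform_projP_ge0 (x v : 'cV[R]_n) : 0 <= bform (projP x) v v.
Proof. by have := bform_gram_ge0 (projP x) v; rewrite trmx_projP projP_idem. Qed.

Lemma bform_projP_eq0 (x v : 'cV[R]_n) : bform (projP x) v v = 0 -> projP x *m v = 0.
Proof. by have := @bform_gram_eq0 (projP x) v; rewrite trmx_projP projP_idem. Qed.

End BilinearForm.

Section Hurwitz.
Variable R : realType.
Local Notation C := (fun x : R => (x%:C)%C).

Definition Re_col N (z : 'rV[R[i]]_N) : 'cV[R]_N := (map_mx (@complex.Re R) z)^T.
Definition Im_col N (z : 'rV[R[i]]_N) : 'cV[R]_N := (map_mx (@complex.Im R) z)^T.

Lemma hermitian_form_real N (M : 'M[R]_N) (z : 'rV[R[i]]_N) : M^T = M ->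
  (z *m map_mx C M *m (map_mx conjc z)^T) 0 0 =
  C (bform M (Re_col z) (Re_col z) + bform M (Im_col z) (Im_col z)).
Proof.
move=> sM; have Msym a b : M a b = M b a by rewrite -[M in LHS]sM mxE.
have term (u w : R[i]) (m : R) :
  complex.Re (u * C m * conjc w) =
    m * (complex.Re u * complex.Re w + complex.Im u * complex.Im w) /\
  complex.Im (u * C m * conjc w) =
    m * (complex.Im u * complex.Re w - complex.Re u * complex.Im w).
  by case: u => ? ?; case: w => ? ? /=; split; ring.
have -> : (z *m map_mx C M *m (map_mx conjc z)^T) 0 0 =
    \sum_b \sum_a z 0 a * C (M a b) * conjc (z 0 b).
  rewrite !mxE; apply: eq_bigr => b _; rewrite !mxE big_distrl /=.
  by apply: eq_bigr => a _; rewrite !mxE.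
have ReE (F : 'I_N -> R[i]) : complex.Re (\sum_i F i) = \sum_i complex.Re (F i).
  exact: (raddf_sum (@complex.Re R : Rcomplex R -> R)).
have ImE (F : 'I_N -> R[i]) : complex.Im (\sum_i F i) = \sum_i complex.Im (F i).
  exact: (raddf_sum (@complex.Im R : Rcomplex R -> R)).
apply/eqP; rewrite eq_complex /=; apply/andP; split; apply/eqP.
  rewrite ReE !bformE -big_split /=; apply: eq_bigr => b _.
  rewrite ReE -big_split /=; apply: eq_bigr => a _.
  by rewrite (term _ _ _).1 !mxE; ring.
rewrite ImE; under eq_bigr do rewrite ImE.
under eq_bigr do under eq_bigr do rewrite (term _ _ _).2 mulrBr.
under eq_bigr do rewrite sumrB.
rewrite sumrB; apply/eqP; rewrite subr_eq0; apply/eqP; rewrite [RHS]exchange_big.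
by apply: eq_bigr => a _; apply: eq_bigr => b _; rewrite Msym; ring.
Qed.

Lemma hermitian_form_gt0 N (M : 'M[R]_N) (z : 'rV[R[i]]_N) : M^T = M ->
  (forall v, v != 0 -> 0 < bform M v v) -> z != 0 ->
  exists2 Q, 0 < Q & (z *m map_mx C M *m (map_mx conjc z)^T) 0 0 = C Q.
Proof.
move=> sM Mpd z0; rewrite hermitian_form_real //; eexists; last by [].
have ge0 v : 0 <= bform M v v by have [->|/Mpd/ltW] := eqVneq v 0; rewrite ?bform0l.
have [re0|/Mpd] := eqVneq (Re_col z) 0; last by move/ltr_pwDl; apply.
have [im0|/Mpd] := eqVneq (Im_col z) 0; last by rewrite re0 bform0l add0r.
case/eqP: z0; apply/matrixP => i j; rewrite !mxE.
move/matrixP: re0 => /(_ j i); move/matrixP: im0 => /(_ j i).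
by rewrite !mxE; case: (z i j) => a b /= -> ->.
Qed.

(* If [Re lam >= 0], the imaginary part forces [Im lam = 0] and the real part
   becomes a vanishing sum of positive terms. *)
Lemma PI_root_Re_lt0 (kP kI Q N : R) (lam : R[i]) :
  0 < kP -> 0 < kI -> 0 < Q -> 0 < N ->
  C (- kP) * lam * C Q + C (- kI) * C Q = lam ^+ 2 * C N ->
  complex.Re lam < 0.
Proof.
move=> kP0 kI0 Q0 N0; case: lam => a c /= eq.
have := congr1 (@complex.Re R) eq; have := congr1 (@complex.Im R) eq => /= eqI eqR.
have {}eqI : c * (kP * Q + 2 * a * N) = 0.
  by move/eqP: eqI; rewrite -subr_eq0 -oppr_eq0 => /eqP <-; ring.
have {}eqR : kP * a * Q + kI * Q + (a * a - c * c) * N = 0.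
  by move/eqP: eqR; rewrite -subr_eq0 -oppr_eq0 => /eqP <-; ring.
rewrite ltNge; apply/negP => a_ge0.
have kPQ : 0 < kP * Q by rewrite mulr_gt0.
have aN : 0 <= 2 * a * N by rewrite !mulr_ge0 // ltW.
have c0 : c = 0 by move/eqP: eqI; rewrite mulf_eq0 => /orP [/eqP //|/eqP]; lra.
move: eqR; rewrite c0 mulr0 subr0.
have : 0 <= kP * a * Q by rewrite !mulr_ge0 // ltW.
have : 0 < kI * Q by rewrite mulr_gt0.
have : 0 <= a * a * N by rewrite !mulr_ge0 // ltW.
lra.
Qed.

Lemma hurwitz_PI_block N (L : 'M[R]_N) (kP kI : R) :
  L^T = L -> (forall v, v != 0 -> 0 < bform L v v) -> 0 < kP -> 0 < kI ->
  hurwitz (block_mx (- kP *: L) (- kI *: 1%:M) L (0 : 'M[R]_N)).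
Proof.
move=> sL Lpd kP0 kI0 lam /eigenvalueP [w + w0].
rewrite map_block_mx -[w]hsubmxK mul_row_block scale_row_mx.
set x := lsubmx w; set y := rsubmx w => /eq_row_mx [eq1 eq2].
rewrite map_mx0 mulmx0 addr0 map_mxZ map_mx1 -scalemxAr mulmx1 in eq2.
rewrite map_mxZ -scalemxAr in eq1.
set Lc := map_mx _ L in eq1 *; set xc := (map_mx conjc x)^T.
have [x0|x0] := eqVneq x 0.
  move: eq1; rewrite x0 mul0mx scaler0 add0r scaler0 => eq1.
  have [y0|y0] := eqVneq y 0.
    by move: w0; rewrite -[w]hsubmxK -/x -/y x0 y0 row_mx0 eqxx.
  have [Q Q0] := hermitian_form_gt0 sL Lpd y0.
  rewrite eq1 mul0mx mxE => /(congr1 (@complex.Re R)) /= Q00.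
  by rewrite -Q00 ltxx in Q0.
have [Q Q0 xLx] := hermitian_form_gt0 sL Lpd x0.
have [Nx Nx0] := hermitian_form_gt0 (trmx1 _ _) (@bform1_gt0 _ _) x0.
rewrite map_mx1 mulmx1 -/xc => xx.
have := congr1 (fun m => (m *m xc) 0 0) eq1.
have := congr1 (fun m => (m *m (Lc *m xc)) 0 0) eq2.
rewrite /= mulmxDl -!scalemxAl !mulmxA => eqy eqx.
rewrite [LHS]mxE [RHS]mxE xLx in eqy.
rewrite [LHS]mxE [RHS]mxE [X in X + _]mxE xLx xx in eqx.
apply: (PI_root_Re_lt0 kP0 kI0 Q0 Nx0).
by rewrite eqy expr2 -[lam * lam * _]mulrA -eqx; ring.
Qed.
End Hurwitz.

Section BlockIndex.
Variables (n d : nat).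

Lemma blk_idx_lt (i : 'I_n) (r : 'I_d) : (i * d + r < n * d)%N.
Proof.
apply: (@leq_trans (i * d + d)); first by rewrite ltn_add2l.
by rewrite -mulSnr leq_mul2r ltn_ord orbT.
Qed.

Definition blk_idx (i : 'I_n) (r : 'I_d) : 'I_(n * d) := Ordinal (blk_idx_lt i r).

Lemma blk_agent_idx i r : blk_agent (blk_idx i r) = i.
Proof.
have d0 : (0 < d)%N := leq_ltn_trans (leq0n r) (ltn_ord r).
by apply: val_inj; rewrite /= divnMDl // divn_small ?addn0.
Qed.

Lemma blk_coord_idx i r : blk_coord (blk_idx i r) = r.
Proof. by apply: val_inj; rewrite /= modnMDl modn_small. Qed.

Lemma blk_idxK (a : 'I_(n * d)) : blk_idx (blk_agent a) (blk_coord a) = a.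
Proof. by apply: val_inj; rewrite /= -divn_eq. Qed.

Lemma sum_blk_idx (V : nmodType) (F : 'I_(n * d) -> V) :
  \sum_a F a = \sum_i \sum_r F (blk_idx i r).
Proof.
rewrite pair_big (reindex (fun a => (blk_agent a, blk_coord a))) /=.
  by apply: eq_bigr => a _; rewrite blk_idxK.
exists (fun p : 'I_n * 'I_d => blk_idx p.1 p.2) => [a _|[i r] _] /=.
  exact: blk_idxK.
by rewrite blk_agent_idx blk_coord_idx.
Qed.

End BlockIndex.

Section LaplacianForm.
Variables (R : realType) (n d : nat) (adj : rel 'I_n) (g : 'I_n -> 'I_n -> 'cV[R]_d).
Hypotheses (adj_sym : symmetric adj) (adj_irr : irreflexive adj).
Hypothesis projP_g_sym : forall i k, adj i k -> projP (g i k) = projP (g k i).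

(* Each edge is counted from both of its ends; the two half-contributions
   combine into the projected squared difference along that edge. *)
Lemma lap_form_edges (x : 'I_n -> 'cV[R]_d) :
  2 * \sum_i \sum_j bform (lap_block adj g i j) (x i) (x j) =
  \sum_i \sum_(k | adj i k) bform (projP (g i k)) (x i - x k) (x i - x k).
Proof.
pose half i k := bform (projP (g i k)) (x i) (x i) - bform (projP (g i k)) (x i) (x k).
have row i : \sum_j bform (lap_block adj g i j) (x i) (x j) = \sum_(k | adj i k) half i k.
  rewrite (bigD1 i) //= {1}/lap_block eqxx bform_sumM /half [RHS]sumrB.
  congr (_ + _).
  rewrite -sumrN big_mkcond [RHS]big_mkcond /=; apply: eq_bigr => j _.
  have [->|ji] := eqVneq j i; first by rewrite adj_irr.
  by rewrite /lap_block eq_sym (negbTE ji); case: (adj i j); rewrite ?bformNM ?bform0M.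
have edge i k : adj i k ->
    bform (projP (g i k)) (x i - x k) (x i - x k) = half i k + half k i.
  by move=> ik; rewrite /half -(projP_g_sym ik) !bformBl !bformBr !opprB !addrA.
under [RHS]eq_bigr do rewrite (eq_bigr _ (edge _)) big_split /=.
rewrite big_split /= mulr2n mulrDl mul1r (eq_bigr _ (fun i _ => row i)).
congr (_ + _); under eq_bigr do rewrite big_mkcond /=.
rewrite exchange_big /=; apply: eq_bigr => k _.
by rewrite [RHS]big_mkcond; apply: eq_bigr => i _; rewrite adj_sym.
Qed.

End LaplacianForm.

Lemma affine_motion_eq0 (R : realType) (n d : nat) (p dp : 'I_n -> 'cV[R]_d)
    (w : 'cV[R]_d) (c : R) (i0 i1 : 'I_n) :
  (forall i, dp i = w + c *: p i) -> dp i0 = 0 -> dp i1 = 0 -> p i0 != p i1 ->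
  forall i, dp i = 0.
Proof.
move=> dpE dp0 dp1 p01.
have /eqP : c *: (p i0 - p i1) = 0.
  by rewrite scalerBr -(subr0 0) -{1}dp0 -dp1 !dpE opprD addrACA subrr add0r.
rewrite scaler_eq0 subr_eq0 (negbTE p01) orbF => /eqP c0 i.
by move: dp0; rewrite !dpE c0 !scale0r !addr0.
Qed.

Section FollowerLaplacian.
Variables (R : realType) (nl nf d : nat) (adj : rel 'I_(nl + nf))
  (g : 'I_(nl + nf) -> 'I_(nl + nf) -> 'cV[R]_d).

Lemma L_ff_blkE (k l : 'I_nf) (r s : 'I_d) :
  L_ff adj g (blk_idx k r) (blk_idx l s) =
  lap_block adj g (rshift nl k) (rshift nl l) r s.
Proof.
rewrite /L_ff /bearing_laplacian /blockmx_of mxE mxE castmxE mxE.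
have shift (m : 'I_nf) (t : 'I_d) :
    cast_ord (esym (mulnDl nl nf d)) (rshift (nl * d) (blk_idx m t)) =
    blk_idx (rshift nl m) t.
  by apply: val_inj; rewrite /= mulnDl addnA.
by rewrite !shift !blk_agent_idx !blk_coord_idx.
Qed.

Definition follower_ext (v : 'cV[R]_(nf * d)) (i : 'I_(nl + nf)) : 'cV[R]_d :=
  if split i is inr k then \col_r v (blk_idx k r) 0 else 0.

Lemma follower_ext_lshift v (i : 'I_nl) : follower_ext v (lshift nf i) = 0.
Proof. by rewrite /follower_ext (unsplitK (inl _ : 'I_nl + 'I_nf)). Qed.

Lemma follower_ext_rshift v (k : 'I_nf) :
  follower_ext v (rshift nl k) = \col_r v (blk_idx k r) 0.
Proof. by rewrite /follower_ext (unsplitK (inr _ : 'I_nl + 'I_nf)). Qed.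

Lemma bform_L_ff v : bform (L_ff adj g) v v =
  \sum_i \sum_j bform (lap_block adj g i j) (follower_ext v i) (follower_ext v j).
Proof.
rewrite [RHS]big_split_ord /= [X in _ = X + _]big1 ?add0r; last first.
  by move=> i _; apply: big1 => j _; rewrite follower_ext_lshift bform0l.
transitivity (\sum_(l < nf) \sum_(s < d) \sum_(k < nf) \sum_(r < d)
    v (blk_idx k r) 0 * lap_block adj g (rshift nl k) (rshift nl l) r s *
    v (blk_idx l s) 0).
  rewrite bformE sum_blk_idx; apply: eq_bigr => l _; apply: eq_bigr => s _.
  rewrite sum_blk_idx; apply: eq_bigr => k _; apply: eq_bigr => r _.
  by rewrite L_ff_blkE.
under [RHS]eq_bigr => k _.
  rewrite big_split_ord /= big1 ?add0r => [|j _]; last first.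
    by rewrite follower_ext_lshift bform0r.
  over.
rewrite [RHS]exchange_big /=; apply: eq_bigr => l _.
under [RHS]eq_bigr do rewrite bformE.
rewrite [RHS]exchange_big /=; apply: eq_bigr => s _; apply: eq_bigr => k _.
by apply: eq_bigr => r _; rewrite !follower_ext_rshift !mxE.
Qed.

Hypotheses (adj_sym : symmetric adj) (adj_irr : irreflexive adj).
Variable p : 'I_(nl + nf) -> 'cV[R]_d.
Hypothesis g_bearing : forall i j, adj i j -> g i j = bearing (p i) (p j).
Hypothesis p_rigid : inf_bearing_rigid adj p.

Lemma projP_g i k : adj i k -> projP (g i k) = projP (p k - p i).
Proof.
move=> ik; rewrite g_bearing // projP_bearing //; apply: p_rigid.1.
by apply: contraTneq ik => ->; rewrite adj_irr.
Qed.

Lemma projP_g_sym i k : adj i k -> projP (g i k) = projP (g k i).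
Proof.
move=> ik; have ki : adj k i by rewrite adj_sym.
by rewrite projP_g // projP_g // -opprB projPN.
Qed.

Lemma trmx_L_ff : (L_ff adj g)^T = L_ff adj g.
Proof.
apply/matrixP => a b; rewrite mxE -(blk_idxK a) -(blk_idxK b) !L_ff_blkE /lap_block.
set i := rshift nl _; set j := rshift nl _.
rewrite [j == i]eq_sym [adj j i]adj_sym; have [<-|ij] := eqVneq i j.
  by rewrite !summxE; apply: eq_bigr => k _; rewrite -[in LHS]trmx_projP mxE.
case ij_adj: (adj i j); last by rewrite !mxE.
rewrite [LHS]mxE [RHS]mxE projP_g_sym //.
by rewrite -[in LHS]trmx_projP mxE.
Qed.

Lemma bform_L_ff_edges v : 2 * bform (L_ff adj g) v v =
  \sum_i \sum_(k | adj i k) bform (projP (g i k))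
    (follower_ext v i - follower_ext v k) (follower_ext v i - follower_ext v k).
Proof. by rewrite bform_L_ff lap_form_edges // => i k; apply: projP_g_sym. Qed.

Lemma bform_L_ff_ge0 v : 0 <= bform (L_ff adj g) v v.
Proof.
rewrite -(pmulr_rge0 _ (ltr0Sn _ 1)) bform_L_ff_edges.
by apply: sumr_ge0 => i _; apply: sumr_ge0 => k _; apply: bform_projP_ge0.
Qed.

Lemma bform_L_ff_eq0 v : bform (L_ff adj g) v v = 0 ->
  forall i k, adj i k -> projP (g i k) *m (follower_ext v i - follower_ext v k) = 0.
Proof.
move=> form0 i k ik; apply: bform_projP_eq0.
have /esym := bform_L_ff_edges v; rewrite form0 mulr0.
move/(psumr_eq0P (fun i _ => sumr_ge0 _ (fun k _ => bform_projP_ge0 _ _))).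
move/(_ i isT)/(psumr_eq0P (fun k _ => bform_projP_ge0 _ _)).
by apply.
Qed.

Hypothesis two_leaders : (2 <= nl)%N.

Lemma bform_L_ff_gt0 v : v != 0 -> 0 < bform (L_ff adj g) v v.
Proof.
rewrite lt_def bform_L_ff_ge0 andbT; apply: contra => /eqP /bform_L_ff_eq0 ker.
set x := follower_ext v in ker.
have [w [c motion]] : exists w c, forall i, x i = w + c *: p i.
  apply: (p_rigid.2 x).1 => i j r ij _; apply: derive1_bearing_eq0.
  by rewrite -projP_g // -opprB mulmxN ker // oppr0.
pose l0 : 'I_nl := Ordinal (ltnW two_leaders).
pose l1 : 'I_nl := Ordinal two_leaders.
have leaders_apart : p (lshift nf l0) != p (lshift nf l1).
  by apply: p_rigid.1; apply/eqP => /(congr1 val).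
have x0 := affine_motion_eq0 motion (follower_ext_lshift v l0)
  (follower_ext_lshift v l1) leaders_apart.
apply/eqP/matrixP => a j; rewrite ord1 mxE -(blk_idxK a).
have := x0 (rshift nl (blk_agent a)); rewrite /x follower_ext_rshift.
by move/matrixP => /(_ (blk_coord a) 0); rewrite !mxE.
Qed.

End FollowerLaplacian.

Theorem lemma3 (R : realType) (nl nf d : nat)
  (adj : rel 'I_(nl + nf)) (g : 'I_(nl + nf) -> 'I_(nl + nf) -> 'cV[R]_d) :
  (2 <= nl + nf)%N -> (2 <= d)%N ->
  symmetric adj -> irreflexive adj ->
  (* standing assumption *)
  (exists pstar : 'I_(nl + nf) -> 'cV[R]_d,
      (forall i j, adj i j -> g i j = bearing (pstar i) (pstar j)) /\
      inf_bearing_rigid adj pstar) ->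
  (2 <= nl)%N ->
  forall kP kI : R, 0 < kP -> 0 < kI ->
  hurwitz (block_mx (- kP *: L_ff adj g) (- kI *: 1%:M)
                    (L_ff adj g) (0 : 'M[R]_(nf * d))).
Proof.
move=> _ _ adj_sym adj_irr [p [g_bearing p_rigid]] nl2 kP kI kP0 kI0.
apply: hurwitz_PI_block => //.
  exact: (trmx_L_ff adj_sym adj_irr g_bearing p_rigid).
exact: (bform_L_ff_gt0 adj_sym adj_irr g_bearing p_rigid nl2).
Qed.
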